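(* Let $R$ be a ring with identity, ${}_RM$ a finitely generated semisimple left $R$-module, and $\varphi:M\to M$ an indecomposable nilpotent element of the ring $\mathrm{Hom}_R(M,M)$. Let $d=\dim_R(M)$ and let $n$ be the index of nilpotency of $\varphi$ ($\varphi^n=0\ne\varphi^{n-1}$). For $\psi\in\mathrm{Hom}_R(M,M)$ the following are equivalent: (1) $\psi\circ\varphi=\varphi\circ\psi$; (2) there exist an $R$-generating set $\{y_j\in M\mid1\le j\le d\}$ of ${}_RM$ and elements $a_1,\dots,a_n\in R$ such that for all $1\le j\le d$ \[a_1y_j+a_2\varphi(y_j)+\cdots+a_n\varphi^{n-1}(y_j)=\psi(y_j)\] and \[a_1\varphi(y_j)+a_2\varphi(\varphi(y_j))+\cdots+a_n\varphi^{n-1}(\varphi(y_j))=\psi(\varphi(y_j)).\]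
   Context: A nilpotent element $s$ of a ring $S$ is decomposable if $es=se$ for some idempotent $e\in S$ with $0\ne e\ne1$, and indecomposable otherwise. $\dim_R$ denotes composition length. *)

From HB Require Import structures.
From mathcomp Require Import all_boot all_order all_algebra.
Set Implicit Arguments. Unset Strict Implicit. Unset Printing Implicit Defensive.
Import GRing.Theory.
Local Open Scope ring_scope.

Section ModuleDefs.
Variables (R : nzRingType) (M : lmodType R).

Definition submodule (S : M -> Prop) : Prop :=
  [/\ S 0, (forall x y, S x -> S y -> S (x + y)) & (forall (r : R) x, S x -> S (r *: x))].

Definition semisimple_module : Prop :=
  forall S, submodule S ->
    exists T, [/\ submodule T,
                  (forall x, S x -> T x -> x = 0) &
                  (forall x, exists s t, [/\ S s, T t & x = s + t])].

Definition generates (k : nat) (y : 'I_k -> M) : Prop :=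
  forall x : M, exists c : 'I_k -> R, x = \sum_(i < k) c i *: y i.

Definition finitely_generated : Prop :=
  exists k (y : 'I_k -> M), generates y.

Definition same_set (S T : M -> Prop) : Prop := forall x, S x <-> T x.

(* M has a composition series of length d:
   0 = C 0 < C 1 < ... < C d = M, each C (i+1)/C i simple. *)
Definition comp_length (d : nat) : Prop :=
  exists C : nat -> M -> Prop,
    [/\ forall i, submodule (C i),
        same_set (C 0) (fun x => x = 0),
        same_set (C d) (fun _ => True),
        forall i, (i < d)%N -> (forall x, C i x -> C i.+1 x) /\ (exists x, C i.+1 x /\ ~ C i x)
      & forall i S, (i < d)%N -> submodule S ->
          (forall x, C i x -> S x) -> (forall x, S x -> C i.+1 x) ->
          same_set S (C i) \/ same_set S (C i.+1)].

Definition indecomposable (phi : {linear M -> M}) : Prop :=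
  ~ exists e : {linear M -> M},
      [/\ forall x, e (e x) = e x,
          exists x, e x != 0,
          exists x, e x != x
        & forall x, e (phi x) = phi (e x)].

End ModuleDefs.

From HB Require Import structures.
From mathcomp Require Import all_boot all_order all_algebra zify.
From Stdlib Require Import Classical ClassicalEpsilon.
Set Implicit Arguments. Unset Strict Implicit. Unset Printing Implicit Defensive.
Import GRing.Theory.
Local Open Scope ring_scope.

(** Commuting with [phi] makes [psi] a polynomial in [phi] as soon as [M] is a
cyclic [R[phi]]-module, i.e. [M] is spanned over [R] by [y, phi y, ...,
phi^(n-1) y] for some [y]: then [psi y = sum a_i phi^i y] determines [psi] on
every [phi^k y]. The [phi^k y] for [k < d] (zero when [k >= n]) generate [M]
because [n <= d]: the kernels of the powers of [phi] form a strictly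
increasing chain of length [n], and no such chain is longer than a
composition series.

To see that [M] is cyclic, take [y] outside [ker phi^(n-1)] inside a
complement of that kernel, so that [r phi^(n-1) y = 0] forces [r y = 0], and a
complement [U] of [R phi^(n-1) y]. Then [M] is the direct sum of the span of
the [phi^k y] and of [{x | phi^i x \in U for all i < n}], both
[phi]-stable; the projection onto the first summand is an idempotent commuting
with [phi], so by indecomposability it is the identity. *)

Section Submodules.
Variables (R : nzRingType) (M : lmodType R).
Implicit Types (S T : M -> Prop) (x y : M).

Definition included S T := forall x, S x -> T x.

Definition subsum S T x := exists s t, [/\ S s, T t & x = s + t].

Lemma submoduleB S x y : submodule S -> S x -> S y -> S (x - y).
Proof. by case=> _ SD SZ Sx Sy; apply: SD => //; rewrite -scaleN1r; apply: SZ. Qed.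

Lemma submodule_sum S k (F : 'I_k -> M) :
  submodule S -> (forall i, S (F i)) -> S (\sum_(i < k) F i).
Proof. by case=> S0 SD _ SF; apply: big_ind. Qed.

Lemma submodule_meet S T : submodule S -> submodule T -> submodule (fun x => S x /\ T x).
Proof.
case=> S0 SD SZ [T0 TD TZ]; split=> // [x y [Sx Tx] [Sy Ty]|r x [Sx Tx]].
  by split; [apply: SD | apply: TD].
by split; [apply: SZ | apply: TZ].
Qed.

Lemma submodule_subsum S T : submodule S -> submodule T -> submodule (subsum S T).
Proof.
case=> S0 SD SZ [T0 TD TZ]; split.
- by exists 0, 0; rewrite addr0.
- move=> _ _ [s [t [Ss Tt ->]]] [s' [t' [Ss' Tt' ->]]].
  by exists (s + s'), (t + t'); rewrite addrACA; split; [apply: SD | apply: TD |].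
- move=> r _ [s [t [Ss Tt ->]]].
  by exists (r *: s), (r *: t); rewrite scalerDr; split; [apply: SZ | apply: TZ |].
Qed.

Lemma included_subsumr S T : submodule S -> included T (subsum S T).
Proof. by case=> S0 _ _ x Tx; exists 0, x; rewrite add0r. Qed.

Lemma submodule_ker (N : lmodType R) (f : {linear M -> N}) : submodule (fun x => f x = 0).
Proof.
split=> [|x y fx fy|r x fx]; first exact: linear0.
  by rewrite linearD fx fy addr0.
by rewrite linearZ_LR fx scaler0.
Qed.

Lemma submodule_line y : submodule (fun x => exists r : R, x = r *: y).
Proof.
split; first by exists 0; rewrite scale0r.
  by move=> _ _ [r ->] [s ->]; exists (r + s); rewrite scalerDl.
by move=> r _ [s ->]; exists (r * s); rewrite scalerA.
Qed.

End Submodules.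

Section Chains.
Variables (R : nzRingType) (M : lmodType R).
Implicit Types (A B S : M -> Prop) (K C : nat -> M -> Prop).

Definition strict_chain K n :=
  (forall i, submodule (K i)) /\
  forall i, (i < n)%N -> included (K i) (K i.+1) /\ exists x, K i.+1 x /\ ~ K i x.

(* Unlike a maximal submodule, [B] may be all of [A]. *)
Definition maximal_in B A :=
  included B A /\
  forall S, submodule S -> included B S -> included S A -> same_set S B \/ same_set S A.

Definition saturated_chain C d :=
  [/\ forall i, submodule (C i), included (C 0%N) (fun x => x = 0)
    & forall i, (i < d)%N -> maximal_in (C i) (C i.+1)].

Lemma strict_chain_le K n i j : strict_chain K n -> (i <= j <= n)%N -> included (K i) (K j).
Proof.
move=> [_ stK] /andP[]; elim: j => [|j IH]; first by rewrite leqn0 => /eqP-> _.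
rewrite leq_eqVlt => /orP[/eqP-> _ //|]; rewrite ltnS => ij jn x Kx.
by apply: (proj1 (stK j jn)); apply: IH => //; apply: ltnW.
Qed.

Lemma exists_first_failure (P : nat -> Prop) n :
  exists j, [/\ (j <= n)%N, forall i, (i < j)%N -> P i & (j < n)%N -> ~ P j].
Proof.
elim: n => [|n [j [jn below above]]]; first by exists 0%N.
case: (ltnP j n) => [jn'|nj].
  by exists j; split=> //; [apply: ltnW | move=> _; apply: above].
have {nj} ej : j = n by apply/eqP; rewrite eqn_leq jn.
case: (classic (P n)) => Pn; last by exists n; split=> //; rewrite -ej.
exists n.+1; split=> [//| i | ]; last by rewrite ltnn.
by rewrite ltnS leq_eqVlt => /orP[/eqP-> //|]; rewrite -ej; apply: below.
Qed.

(* The modular law: a step [K < K'] inside [K + B] is still seen inside [B]. *)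
Lemma strict_step_meet (K K' B : M -> Prop) : submodule K -> submodule K' ->
  included K K' -> included K' (subsum K B) -> (exists w, K' w /\ ~ K w) ->
  exists x, (K' x /\ B x) /\ ~ K x.
Proof.
move=> subK subK' KK' K'KB [w [K'w nKw]].
have [a [b [Ka Bb ew]]] := K'KB w K'w.
exists b; split; first split=> //.
  have -> : b = w - a by rewrite ew addrC addKr.
  exact: submoduleB subK' K'w (KK' _ Ka).
by move=> Kb; apply: nKw; rewrite ew; case: subK => _ KD _; apply: KD.
Qed.

Lemma maximal_in_subsum A B (K : M -> Prop) : submodule A -> submodule B -> submodule K ->
  maximal_in B A -> included K A -> ~ included K B -> included A (subsum K B).
Proof.
move=> [_ AD _] subB subK [BA maxB] KA nKB.
have KS : included K (subsum K B).
  by case: subB => B0 _ _ x Kx; exists x, 0; rewrite addr0.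
have SA : included (subsum K B) A.
  by move=> _ [s [t [Ks Bt ->]]]; apply: AD; [apply: KA | apply: BA].
have [SB|AS] := maxB _ (submodule_subsum subK subB) (included_subsumr (T := B) subK) SA.
  by exfalso; apply: nKB => x /KS /SB.
by move=> x /AS.
Qed.

Lemma strict_chain_restrict A B K n : submodule A -> submodule B -> maximal_in B A ->
  strict_chain K n -> included (K n) A ->
  exists L, strict_chain L n.-1 /\ included (L n.-1) B.
Proof.
move=> subA subB maxB chK KnA; have [subK stK] := chK.
have [j [jn below above]] := exists_first_failure (fun i => included (K i) B) n.
(* Deleting the first [K j] not inside [B] leaves only steps that survive
   intersection with [B]. *)
exists (fun i x => K (bump j i) x /\ B x); split; last by move=> x [].
split=> [i|i lt_i_n]; first exact: submodule_meet.
have le_bump : (bump j i <= bump j i.+1 <= n)%N by rewrite /bump; lia.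
split=> [x [Kx Bx]|]; first by split=> //; apply: (strict_chain_le chK le_bump).
pose l := (bump j i.+1).-1.
have def_l : l.+1 = bump j i.+1 by rewrite /l /bump; lia.
have lt_l_n : (l < n)%N by rewrite /l /bump; lia.
have [x [[Kx Bx] nKx]] : exists x, (K l.+1 x /\ B x) /\ ~ K l x.
  apply: strict_step_meet; [exact: subK | exact: subK | exact: (proj1 (stK l lt_l_n)) | |
    exact: (proj2 (stK l lt_l_n))].
  case: (ltnP (bump j i.+1) j) => [lt_bump_j|le_j_bump].
    by rewrite def_l => y /(below _ lt_bump_j); apply: included_subsumr.
  have lt_j_l : (j < l.+1)%N by rewrite ltn_neqAle def_l le_j_bump neq_bump.
  have KlA : included (K l) A.
    by move=> y Ky; apply/KnA/(strict_chain_le chK _ Ky); lia.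
  move=> y Ky; apply: (maximal_in_subsum subA subB (subK l) maxB KlA).
    move=> KlB; apply: (above (leq_trans lt_j_l lt_l_n)) => z Kz.
    by apply/KlB/(strict_chain_le chK _ Kz); lia.
  by apply/KnA/(strict_chain_le chK _ Ky); lia.
exists x; split; first by rewrite -def_l.
by case=> Kx' _; apply/nKx/(strict_chain_le chK _ Kx'); rewrite /l /bump; lia.
Qed.

Lemma strict_chain_length_le C d K n : saturated_chain C d ->
  strict_chain K n -> included (K n) (C d) -> (n <= d)%N.
Proof.
elim: d K n => [|d IH] K n [subC C0 satC] chK KnC.
  case: n chK KnC => // n chK KnC; exfalso.
  have [_ [x [K1x nK0x]]] := (proj2 chK) 0%N isT.
  have Kx : K n.+1 x by apply: (strict_chain_le chK _ K1x); lia.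
  by apply: nK0x; rewrite (C0 x (KnC x Kx)); case: (proj1 chK 0%N).
have [L [chL LC]] := strict_chain_restrict (subC d.+1) (subC d) (satC d (ltnSn d)) chK KnC.
have satC' : saturated_chain C d by split=> // i lt_i_d; apply/satC/ltnW.
by have := IH L n.-1 satC' chL LC; lia.
Qed.

End Chains.

Lemma iter_is_linear (R : nzRingType) (M : lmodType R) (phi : {linear M -> M}) i :
  linear (iter i phi).
Proof. by elim: i => [|i IH] a x y //=; rewrite IH linearP. Qed.

HB.instance Definition _ (R : nzRingType) (M : lmodType R) (phi : {linear M -> M}) i :=
  GRing.isLinear.Build R M M *:%R (iter i phi) (iter_is_linear phi i).

Section Iterates.
Variables (R : nzRingType) (M : lmodType R) (phi : {linear M -> M}).

Lemma iter_nilpotent n k x : (forall x, iter n phi x = 0) -> (n <= k)%N -> iter k phi x = 0.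
Proof. by move=> nil_n le_n_k; rewrite -(subnK le_n_k) iterD nil_n linear0. Qed.

Lemma strict_chain_ker_iter n x0 : (forall x, iter n phi x = 0) -> iter n.-1 phi x0 != 0 ->
  strict_chain (fun i x => iter i phi x = 0) n.
Proof.
move=> nil_n nz_x0; split=> [i|i lt_i_n]; first exact: submodule_ker.
split=> [x /= ker_x|]; first by rewrite ker_x linear0.
exists (iter (n.-1 - i) phi x0); split=> /=.
  by rewrite -iterS -iterD (_ : (i.+1 + (n.-1 - i) = n)%N) ?nil_n //; lia.
by rewrite -iterD (_ : (i + (n.-1 - i) = n.-1)%N); [exact/eqP | lia].
Qed.

Lemma nilpotency_index_le_length d n : comp_length M d ->
  (forall x, iter n phi x = 0) -> (exists x, iter n.-1 phi x != 0) -> (n <= d)%N.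
Proof.
move=> [C [subC C0 Cd stepC maxC]] nil_n [x0 nz_x0].
apply: (strict_chain_length_le (C := C) _ (strict_chain_ker_iter nil_n nz_x0)).
  split=> // [x /(C0 x) // | i lt_i_d].
  by split=> [|S]; [exact: (proj1 (stepC i lt_i_d)) | exact: maxC].
by move=> x _; apply/(Cd x).
Qed.

End Iterates.

Section StableDecomposition.
Variables (R : nzRingType) (M : lmodType R) (phi : {linear M -> M}) (C W : M -> Prop).
Hypotheses (subC : submodule C) (subW : submodule W)
  (CW0 : forall x, C x -> W x -> x = 0) (CW : forall x, exists c, C c /\ W (x - c)).

Definition proj_along (x : M) : M := proj1_sig (constructive_indefinite_description _ (CW x)).

Lemma proj_alongP x : C (proj_along x) /\ W (x - proj_along x).
Proof. exact: proj2_sig (constructive_indefinite_description _ (CW x)). Qed.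

Lemma proj_along_eq x c : C c -> W (x - c) -> proj_along x = c.
Proof.
move=> Cc Wc; have [Cp Wp] := proj_alongP x.
apply/eqP; rewrite -subr_eq0; apply/eqP/CW0; first exact: submoduleB.
have -> : proj_along x - c = (x - c) - (x - proj_along x).
  by rewrite opprB [RHS]addrC addrA subrK.
exact: submoduleB.
Qed.

Lemma proj_along_is_linear : linear proj_along.
Proof.
move=> a u v; have [Cu Wu] := proj_alongP u; have [Cv Wv] := proj_alongP v.
apply: proj_along_eq; first by case: subC => _ CD CZ; apply: CD => //; apply: CZ.
have -> : a *: u + v - (a *: proj_along u + proj_along v) =
    a *: (u - proj_along u) + (v - proj_along v) by rewrite scalerBr opprD addrACA.
by case: subW => _ WD WZ; apply: WD => //; apply: WZ.
Qed.

HB.instance Definition _ := GRing.isLinear.Build R M M *:%R proj_along proj_along_is_linear.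

Lemma proj_along_id c : C c -> proj_along c = c.
Proof. by move=> Cc; apply: proj_along_eq; rewrite // subrr; case: subW. Qed.

Hypotheses (Cphi : forall x, C x -> C (phi x)) (Wphi : forall x, W x -> W (phi x)).

Lemma proj_along_comm x : proj_along (phi x) = phi (proj_along x).
Proof.
have [Cp Wp] := proj_alongP x.
by apply: proj_along_eq; [apply: Cphi | rewrite -linearB; apply: Wphi].
Qed.

Lemma indecomposable_stable_summand : indecomposable phi ->
  (exists c, C c /\ c != 0) -> forall x, C x.
Proof.
move=> indec [c [Cc nz_c]] x; have [Cp _] := proj_alongP x.
suff <- : proj_along x = x by [].
apply: NNPP => nfix; apply: indec; exists proj_along; split.
- by move=> v; apply/proj_along_id/(proj_alongP v).1.
- by exists c; rewrite /= proj_along_id.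
- by exists x; apply/eqP.
- exact: proj_along_comm.
Qed.

End StableDecomposition.

Lemma semisimple_ann_reflecting_vector (R : nzRingType) (M : lmodType R)
    (f : {linear M -> M}) : semisimple_module M -> (exists x, f x != 0) ->
  exists y, f y != 0 /\ forall r : R, r *: f y = 0 -> r *: y = 0.
Proof.
move=> ssM [x fx]; have [T [subT kerT0 kerT]] := ssM _ (submodule_ker f).
have [k [t [fk Tt ex]]] := kerT x.
exists t; split; first by move: fx; rewrite ex linearD fk add0r.
move=> r frt; apply: kerT0; first by rewrite linearZ_LR frt.
by case: subT => _ _; apply.
Qed.

Section CyclicVector.
Variables (R : nzRingType) (M : lmodType R) (phi : {linear M -> M}).

Definition cyclic_span n y x := exists r : nat -> R, x = \sum_(k < n) r k *: iter k phi y.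

Lemma submodule_cyclic_span n y : submodule (cyclic_span n y).
Proof.
split.
- by exists (fun=> 0); rewrite big1 // => k _; rewrite scale0r.
- move=> _ _ [r ->] [s ->]; exists (fun k => r k + s k).
  by rewrite -big_split; apply: eq_bigr => k _; rewrite scalerDl.
- move=> a _ [r ->]; exists (fun k => a * r k).
  by rewrite scaler_sumr; apply: eq_bigr => k _; rewrite scalerA.
Qed.

Lemma cyclic_span_iter n y k : (forall x, iter n phi x = 0) -> cyclic_span n y (iter k phi y).
Proof.
move=> nil_n; case: (ltnP k n) => [lt_k_n|le_n_k]; last first.
  by rewrite (iter_nilpotent _ nil_n) //; case: (submodule_cyclic_span n y).
exists (fun i => if i == k then 1 else 0).
rewrite (bigD1 (Ordinal lt_k_n)) //= eqxx scale1r big1 ?addr0 // => i ne_i_k.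
by have /negbTE-> : (i : nat) != k by []; rewrite scale0r.
Qed.

Lemma cyclic_span_phi n y x : (forall x, iter n phi x = 0) ->
  cyclic_span n y x -> cyclic_span n y (phi x).
Proof.
move=> nil_n [r ->]; rewrite linear_sum.
apply: submodule_sum (submodule_cyclic_span n y) _ => k; rewrite linearZ_LR /=.
by case: (submodule_cyclic_span n y) => _ _; apply; exact: (cyclic_span_iter y k.+1 nil_n).
Qed.

Section TopComplement.
Variables (m : nat) (y : M) (U : M -> Prop).
Hypotheses (nil_m : forall x, iter m.+1 phi x = 0) (subU : submodule U)
  (ann_top : forall r : R, r *: iter m phi y = 0 -> r *: y = 0)
  (lineU0 : forall x, (exists r : R, x = r *: iter m phi y) -> U x -> x = 0)
  (lineU : forall x, exists s u, [/\ exists r : R, s = r *: iter m phi y, U u & x = s + u]).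

Definition iterates_in (x : M) := forall i, (i <= m)%N -> U (iter i phi x).

Lemma submodule_iterates_in : submodule iterates_in.
Proof.
case: subU => U0 UD UZ; split=> [i _|x x' Ux Ux' i le_i_m|r x Ux i le_i_m].
- by rewrite linear0.
- by rewrite linearD; apply: UD; [apply: Ux | apply: Ux'].
- by rewrite linearZ_LR; apply/UZ/Ux.
Qed.

Lemma iterates_in_phi x : iterates_in x -> iterates_in (phi x).
Proof.
move=> Ux i le_i_m; rewrite -iterSr; case: (ltnP i m) => [lt_i_m|le_m_i].
  exact: Ux.
by rewrite (iter_nilpotent _ nil_m) //; case: subU.
Qed.

Lemma cyclic_span_iterates_in_eq0 c : cyclic_span m.+1 y c -> iterates_in c -> c = 0.
Proof.
move=> [r ->] Uc.
have coef0 k : (k <= m)%N -> r k *: y = 0.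
  elim/ltn_ind: k => k IH le_k_m.
  apply: ann_top; apply: lineU0; first by exists (r k).
  have := Uc (m - k)%N (leq_subr k m).
  rewrite linear_sum (bigD1 (Ordinal (le_k_m : (k < m.+1)%N))) //= big1 ?addr0.
    by rewrite linearZ_LR /= -iterD subnK.
  move=> i ne_i_k; have /= {}ne_i_k : (i : nat) != k by [].
  rewrite linearZ_LR /= -iterD; case: (ltnP i k) => [lt_i_k|le_k_i].
    by rewrite -linearZ_LR (IH i lt_i_k) ?linear0 //; lia.
  by rewrite (iter_nilpotent _ nil_m) ?scaler0 //; lia.
rewrite big1 // => k _.
by rewrite -linearZ_LR coef0 ?linear0 // -ltnS.
Qed.

(* Correct [x] one power at a time, from [phi^m] down to [phi^0]: subtracting
   [r phi^k y] only changes [phi^i] for [i <= m - k]. *)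
Lemma cyclic_span_add_iterates_in x : exists c, cyclic_span m.+1 y c /\ iterates_in (x - c).
Proof.
have [_ CD CZ] := submodule_cyclic_span m.+1 y.
have partial k : (k <= m.+1)%N -> exists c, cyclic_span m.+1 y c /\
    forall i, (m.+1 - k <= i <= m)%N -> U (iter i phi (x - c)).
  elim: k => [_|k IH lt_k_m].
    by exists 0; split=> [|i ?]; [case: (submodule_cyclic_span m.+1 y) | lia].
  have [c [Cc Uc]] := IH (ltnW lt_k_m).
  have [_ [u [[r ->] Uu e]]] := lineU (iter (m - k) phi (x - c)).
  exists (c + r *: iter k phi y); split.
    by apply: CD => //; apply/CZ/cyclic_span_iter.
  move=> i bound_i; rewrite opprD addrA linearB linearZ_LR /= -iterD.
  case: (eqVneq i (m - k)%N) => [-> | ne_i].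
    by rewrite subnK // e [r *: _ + u]addrC addrK.
  have le_m_ik : (m.+1 <= i + k)%N by lia.
  by rewrite (iter_nilpotent _ nil_m le_m_ik) scaler0 subr0; apply: Uc; lia.
have [c [Cc Uc]] := partial m.+1 (leqnn _).
by exists c; split=> // i le_i_m; apply: Uc; rewrite subnn.
Qed.

End TopComplement.

Lemma indecomposable_nilpotent_cyclic n : semisimple_module M -> indecomposable phi ->
  (forall x, iter n phi x = 0) -> (exists x, iter n.-1 phi x != 0) ->
  exists y, forall x, cyclic_span n y x.
Proof.
move=> ssM indec; case: n => [nil_0 [x]|m nil_m nz_m]; first by rewrite nil_0 eqxx.
have [y [nz_y ann_y]] := semisimple_ann_reflecting_vector ssM nz_m.
have [U [subU lineU0 lineU]] := ssM _ (submodule_line (iter m phi y)).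
exists y; apply: (indecomposable_stable_summand (submodule_cyclic_span m.+1 y)
  (submodule_iterates_in m subU)).
- exact: cyclic_span_iterates_in_eq0.
- exact: cyclic_span_add_iterates_in.
- by move=> x; apply: cyclic_span_phi.
- by move=> x; apply: iterates_in_phi.
- exact: indec.
- exists y; split; first exact: (cyclic_span_iter y 0 nil_m).
  by apply: contraNneq nz_y => ->; rewrite linear0.
Qed.

Lemma cyclic_generates n d y : (forall x, iter n phi x = 0) -> (n <= d)%N ->
  (forall x, cyclic_span n y x) -> generates (fun j : 'I_d => iter j phi y).
Proof.
move=> nil_n le_n_d cyc x; have [c ->] := cyc x; exists (fun j => c j).
rewrite (big_ord_widen d (fun j => c j *: iter j phi y)) // big_mkcond.
apply: eq_bigr => j _; case: ifP => // /negbT; rewrite -leqNgt => le_n_j.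
by rewrite (iter_nilpotent _ nil_n le_n_j) scaler0.
Qed.

Lemma commuting_on_cyclic (psi : {linear M -> M}) n y (r : nat -> R) k :
  (forall x, psi (phi x) = phi (psi x)) -> psi y = \sum_(i < n) r i *: iter i phi y ->
  \sum_(i < n) r i *: iter i phi (iter k phi y) = psi (iter k phi y).
Proof.
move=> comm psi_y; have -> : psi (iter k phi y) = iter k phi (psi y).
  by elim: k => //= k IH; rewrite comm IH.
rewrite psi_y linear_sum; apply: eq_bigr => i _.
by rewrite linearZ_LR -iterD addnC iterD.
Qed.

End CyclicVector.

Lemma linear_eq_on_generators (R : nzRingType) (M : lmodType R) (f g : {linear M -> M})
    k (y : 'I_k -> M) :
  generates y -> (forall j, f (y j) = g (y j)) -> forall x, f x = g x.
Proof.
move=> gen fg x; have [c ->] := gen x; rewrite !linear_sum.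
by apply: eq_bigr => j _; rewrite !linearZ_LR fg.
Qed.

Theorem theorem4p8 (R : nzRingType) (M : lmodType R)
  (fgM : finitely_generated M) (ssM : semisimple_module M)
  (phi : {linear M -> M}) (indec : indecomposable phi)
  (d : nat) (hd : comp_length M d)
  (n : nat) (nil_n : forall x, iter n phi x = 0)
  (nz_n1 : exists x, iter n.-1 phi x != 0)
  (psi : {linear M -> M}) :
  (forall x, psi (phi x) = phi (psi x)) <->
  (exists (y : 'I_d -> M) (a : 'I_n -> R),
     generates y /\
     forall j : 'I_d,
       \sum_(i < n) a i *: iter i phi (y j) = psi (y j) /\
       \sum_(i < n) a i *: iter i phi (phi (y j)) = psi (phi (y j))).
Proof.
split=> [comm | [y [a [gen eqs]]]].
  have [y cyc] := indecomposable_nilpotent_cyclic ssM indec nil_n nz_n1.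
  have [r psi_y] := cyc (psi y).
  exists (fun j : 'I_d => iter j phi y), (fun i : 'I_n => r i); split.
    exact: cyclic_generates nil_n (nilpotency_index_le_length hd nil_n nz_n1) cyc.
  by move=> j; split;
    [exact: commuting_on_cyclic j comm psi_y | exact: commuting_on_cyclic j.+1 comm psi_y].
apply: (linear_eq_on_generators (f := psi \o phi) (g := phi \o psi) gen) => j /=.
have [psi_y psi_phi_y] := eqs j.
rewrite -psi_phi_y -psi_y linear_sum; apply: eq_bigr => i _.
by rewrite linearZ_LR -iterSr.
Qed.
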